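(* If $p_{i,n}\ge0$ for all $n\in\mathbb N$ and $i\in\{0,\dots,m_n\}$, then the unique bounded solution $F$ on $[0,1]$ of the system $$f\big(\hat\varphi^k(x)\big)=\tilde\beta_{i_{k+1}(x),k+1}+\tilde p_{i_{k+1}(x),k+1}\,f\big(\hat\varphi^{k+1}(x)\big),\quad x=\Delta^{-\tilde Q}_{i_1(x)i_2(x)\dots}\in[0,1],\ k=0,1,2,\dots,$$ namely $F(x)=\beta_{i_1(x),1}+\sum_{k\ge2}\tilde\beta_{i_k(x),k}\prod_{j=1}^{k-1}\tilde p_{i_j(x),j}$, is a continuous probability distribution function on $[0,1]$: $F(0)=0$, $F(1)=1$, $F$ is non-decreasing and continuous on $[0,1]$.
   Context: Let $(m_n)_{n\ge1}$ be finite nonnegative integers and $\tilde Q=\|q_{i,n}\|$ ($i\in\{0,\dots,m_n\}$) with $q_{i,n}>0$, $\sum_{i}q_{i,n}=1$ for all $n$, and $\prod_n q_{i_n,n}=0$ for every digit sequence $(i_n)$. Put $a_{0,n}=0$, $a_{i,n}=\sum_{l<i}q_{l,n}$; $\Delta^{\tilde Q}_{j_1j_2\dots}=a_{j_1,1}+\sum_{n\ge2}a_{j_n,n}\prod_{l<n}q_{j_l,l}$. The nega-$\tilde Q$-representation $x=\Delta^{-\tilde Q}_{i_1i_2\dots}$ means $x=\Delta^{\tilde Q}_{i_1[m_2-i_2]i_3[m_4-i_4]\dots}$; every $x\in[0,1]$ has one. Shift operator: if $y=\Delta^{\tilde Q}_{j_1j_2\dots}$ then $\hat\varphi^k(y)=a_{j_{k+1},k+1}+\sum_{n\ge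 k+2}a_{j_n,n}\prod_{l=k+1}^{n-1}q_{j_l,l}$ ($\hat\varphi^0=\mathrm{id}$). Let $P=\|p_{i,n}\|$ have the same shape with $p_{i,n}\in(-1,1)$, $\sum_ip_{i,n}=1$, $\prod_n|p_{i_n,n}|=0$ for every digit sequence, $0<\sum_{i<c}p_{i,n}<1$ for $c\in\{1,\dots,m_n\}$. Put $\beta_{0,n}=0$, $\beta_{c,n}=\sum_{i<c}p_{i,n}$; for odd $n$: $\tilde p_{i,n}=p_{i,n}$, $\tilde\beta_{i,n}=\beta_{i,n}$; for even $n$: $\tilde p_{i,n}=p_{m_n-i,n}$, $\tilde\beta_{i,n}=\beta_{m_n-i,n}$. *)

From Stdlib Require Import Reals.
From Coquelicot Require Import Coquelicot.
Open Scope R_scope.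

(* Conventions: matrices are indexed as  q n i  = q_{i,n}  (column n >= 1,
   digit i in {0..m n}).  Index n = 0 is unused/irrelevant. *)

Fixpoint psum (f : nat -> R) (c : nat) : R :=
  match c with
  | O => 0
  | S c' => psum f c' + f c'
  end.

Fixpoint prod1 (f : nat -> R) (N : nat) : R :=
  match N with
  | O => 1
  | S N' => prod1 f N' * f (S N')
  end.

Definition valid_digits (m : nat -> nat) (d : nat -> nat) : Prop :=
  forall n, (1 <= n)%nat -> (d n <= m n)%nat.

Definition acoef (q : nat -> nat -> R) (n i : nat) : R := psum (q n) i.

(* Q-digits of a nega-Q representation: j_n = i_n (n odd), m_n - i_n (n even) *)
Definition nega_digit (m : nat -> nat) (d : nat -> nat) (n : nat) : nat :=
  if Nat.odd n then d n else (m n - d n)%nat.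

(* k-th term (k >= 0, corresponding to position n = k+1) of the series
   Delta^{Q}_{j_1 j_2 ...} = a_{j_1,1} + sum_{n>=2} a_{j_n,n} prod_{l<n} q_{j_l,l} *)
Definition Qterm (q : nat -> nat -> R) (j : nat -> nat) (k : nat) : R :=
  acoef q (S k) (j (S k)) * prod1 (fun l => q l (j l)) k.

Definition nega_rep (m : nat -> nat) (q : nat -> nat -> R) (d : nat -> nat) (x : R)
  : Prop := is_series (Qterm q (nega_digit m d)) x.

Definition ptil (m : nat -> nat) (p : nat -> nat -> R) (n i : nat) : R :=
  if Nat.odd n then p n i else p n (m n - i)%nat.
Definition betatil (m : nat -> nat) (p : nat -> nat -> R) (n i : nat) : R :=
  if Nat.odd n then psum (p n) i else psum (p n) (m n - i)%nat.

(* k-th term (position n = k+1) of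
   F(x) = beta_{i_1,1} + sum_{n>=2} beta~_{i_n,n} prod_{j<n} p~_{i_j,j} *)
Definition Fterm (m : nat -> nat) (p : nat -> nat -> R) (d : nat -> nat) (k : nat) : R :=
  betatil m p (S k) (d (S k)) * prod1 (fun l => ptil m p l (d l)) k.

(** The values [x = Delta^Q(j)] and [F x = Delta^P(j)] are read off the same
    digit sequence [j] as points of two systems of nested cylinder intervals;
    the nega-digits turn the series defining [F] into [Delta^P] of the
    Q-digits of [x].  Digit sequences are ordered lexicographically in both
    systems, and since all [q] are positive, two sequences with the same
    [Delta^Q] are adjacent cylinder endpoints, ending in maximal resp. minimal
    digits; such sequences also have the same [Delta^P].  Hence
    [F x = sup { Delta^P(j) | Delta^Q(j) <= x }] is nondecreasing and agrees
    with [Delta^P] on every representation.  Every [t] in [0,1] has a greedy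
    P-expansion, so [F] maps [0,1] onto [0,1], and a nondecreasing map of an
    interval onto an interval is continuous. *)

From Stdlib Require Import Reals Lra Lia Classical.
From Coquelicot Require Import Coquelicot.
Open Scope R_scope.

Lemma sum_n_psum (a : nat -> R) n : sum_n a n = psum a (S n).
Proof.
  induction n as [|n IH].
  - rewrite sum_O. simpl. ring.
  - rewrite sum_Sn, IH. simpl. unfold plus; simpl. ring.
Qed.

Lemma is_series_psum (a : nat -> R) (l : R) :
  is_series a l <-> is_lim_seq (psum a) l.
Proof.
  rewrite is_lim_seq_incr_1. split; intro H.
  - apply is_lim_seq_ext with (sum_n a); [apply sum_n_psum | exact H].
  - apply (is_lim_seq_ext (fun n => psum a (S n)) (sum_n a) l); [|exact H].
    intro n. symmetry. apply sum_n_psum.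
Qed.

Lemma is_series_eq (a : nat -> R) (l1 l2 : R) : is_series a l1 -> is_series a l2 -> l1 = l2.
Proof.
  intros H1 H2. rewrite <- (is_series_unique a l1 H1). apply is_series_unique, H2.
Qed.

Lemma is_lim_seq_ub_eventually (u : nat -> R) (l b : R) N :
  is_lim_seq u l -> (forall n, (N <= n)%nat -> u n <= b) -> l <= b.
Proof.
  intros Hl Hb. apply (is_lim_seq_le_loc u (fun _ => b) l b); auto.
  - exists N. exact Hb.
  - apply is_lim_seq_const.
Qed.

Lemma is_lim_seq_lb_eventually (u : nat -> R) (l b : R) N :
  is_lim_seq u l -> (forall n, (N <= n)%nat -> b <= u n) -> b <= l.
Proof.
  intros Hl Hb. apply (is_lim_seq_le_loc (fun _ => b) u b l); auto.
  - exists N. exact Hb.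
  - apply is_lim_seq_const.
Qed.

Lemma psum_le (f : nat -> R) K a b :
  (forall i, (i < K)%nat -> 0 <= f i) -> (a <= b)%nat -> (b <= K)%nat ->
  psum f a <= psum f b.
Proof.
  intros Hf Hab HbK. induction b as [|b IH].
  - replace a with 0%nat by lia. lra.
  - destruct (Nat.eq_dec a (S b)) as [->|Hne]; [lra|].
    simpl. specialize (Hf b ltac:(lia)). specialize (IH ltac:(lia) ltac:(lia)). lra.
Qed.

Lemma psum_lt (f : nat -> R) K a b :
  (forall i, (i < K)%nat -> 0 < f i) -> (a < b)%nat -> (b <= K)%nat ->
  psum f a < psum f b.
Proof.
  intros Hf Hab HbK. induction b as [|b IH]; [lia|].
  simpl. pose proof (Hf b ltac:(lia)).
  destruct (Nat.eq_dec a b) as [->|Hne]; [lra|].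
  specialize (IH ltac:(lia) ltac:(lia)). lra.
Qed.

Lemma prod1_ext f g N :
  (forall l, (1 <= l <= N)%nat -> f l = g l) -> prod1 f N = prod1 g N.
Proof.
  induction N as [|N IH]; intros H; [reflexivity|].
  simpl. rewrite IH by (intros; apply H; lia). rewrite H by lia. reflexivity.
Qed.

Lemma first_difference (j j' : nat -> nat) :
  (forall n, (1 <= n)%nat -> j n = j' n) \/
  exists k, (forall l, (1 <= l <= k)%nat -> j l = j' l) /\ j (S k) <> j' (S k).
Proof.
  destruct (classic (forall n, (1 <= n)%nat -> j n = j' n)) as [H|H]; [now left|right].
  apply not_all_ex_not in H as [n0 Hn0].
  assert (Hind : forall N, (forall l, (1 <= l <= N)%nat -> j l = j' l) \/
            exists k, (k < N)%nat /\ (forall l, (1 <= l <= k)%nat -> j l = j' l) /\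
                      j (S k) <> j' (S k)).
  { induction N as [|N [IH|[k [Hk IH]]]].
    - left. intros; lia.
    - destruct (Nat.eq_dec (j (S N)) (j' (S N))) as [e|ne].
      + left. intros l Hl. destruct (Nat.eq_dec l (S N)) as [->|]; auto. apply IH; lia.
      + right. exists N. auto.
    - right. exists k. split; [lia|exact IH]. }
  destruct (Hind n0) as [Hall|[k [_ Hk]]]; [|now exists k].
  exfalso. apply Hn0. intros Hn. apply Hall. lia.
Qed.

(** The [N]-th cylinder of the digit sequence [j] is the interval
    [[cyl_start c j N, cyl_start c j N + cyl_len c j N]]. *)
Definition cyl_start (c : nat -> nat -> R) (j : nat -> nat) (N : nat) : R :=
  psum (Qterm c j) N.
Definition cyl_len (c : nat -> nat -> R) (j : nat -> nat) (N : nat) : R :=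
  prod1 (fun l => c l (j l)) N.

Lemma cyl_start_S c j N :
  cyl_start c j (S N) = cyl_start c j N + psum (c (S N)) (j (S N)) * cyl_len c j N.
Proof. reflexivity. Qed.

Lemma cyl_len_S c j N : cyl_len c j (S N) = cyl_len c j N * c (S N) (j (S N)).
Proof. reflexivity. Qed.

Lemma cyl_end_S c j N :
  cyl_start c j (S N) + cyl_len c j (S N) =
  cyl_start c j N + psum (c (S N)) (S (j (S N))) * cyl_len c j N.
Proof. rewrite cyl_start_S, cyl_len_S. simpl. ring. Qed.

Lemma cyl_prefix_eq c j j' N : (forall l, (1 <= l <= N)%nat -> j l = j' l) ->
  cyl_start c j N = cyl_start c j' N /\ cyl_len c j N = cyl_len c j' N.
Proof.
  induction N as [|N IH]; intros H; [split; reflexivity|].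
  destruct IH as [IH1 IH2]; [intros; apply H; lia|].
  rewrite !cyl_start_S, !cyl_len_S, IH1, IH2, H by lia. split; reflexivity.
Qed.

Lemma cyl_gap c j j' k : (forall l, (1 <= l <= k)%nat -> j l = j' l) ->
  cyl_start c j' (S k) - (cyl_start c j (S k) + cyl_len c j (S k)) =
  (psum (c (S k)) (j' (S k)) - psum (c (S k)) (S (j (S k)))) * cyl_len c j k.
Proof.
  intros H. destruct (cyl_prefix_eq c j j' k H) as [E1 E2].
  rewrite cyl_end_S, cyl_start_S, <- E1, <- E2. ring.
Qed.

Lemma series_of_zero_tail c j N : (forall M, (N <= M)%nat -> j (S M) = 0%nat) ->
  is_series (Qterm c j) (cyl_start c j N).
Proof.
  intros Hj.
  assert (HS : forall M, (N <= M)%nat -> cyl_start c j M = cyl_start c j N).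
  { induction M as [|M IH]; intros HM.
    - now replace N with 0%nat by lia.
    - destruct (Nat.eq_dec N (S M)) as [->|ne]; [reflexivity|].
      rewrite cyl_start_S, Hj, IH by lia. simpl. ring. }
  apply is_series_psum.
  apply is_lim_seq_ext_loc with (fun _ => cyl_start c j N); [|apply is_lim_seq_const].
  exists N. intros M HM. symmetry. exact (HS M HM).
Qed.

Lemma series_of_zero_digits c : is_series (Qterm c (fun _ => 0%nat)) 0.
Proof. exact (series_of_zero_tail c _ 0 (fun _ _ => eq_refl)). Qed.

Section DigitSeries.

Variables (m : nat -> nat) (c : nat -> nat -> R).
Hypothesis c_ge0 : forall n i, (1 <= n)%nat -> (i <= m n)%nat -> 0 <= c n i.
Hypothesis c_sum1 : forall n, (1 <= n)%nat -> psum (c n) (S (m n)) = 1.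

Lemma psum_col_le n a b : (1 <= n)%nat -> (a <= b)%nat -> (b <= S (m n))%nat ->
  psum (c n) a <= psum (c n) b.
Proof. intros Hn. apply psum_le. intros i Hi. apply c_ge0; lia. Qed.

Lemma psum_col_bounds n i : (1 <= n)%nat -> (i <= S (m n))%nat ->
  0 <= psum (c n) i <= 1.
Proof.
  intros Hn Hi. split.
  - apply (psum_col_le n 0 i); lia.
  - rewrite <- (c_sum1 n Hn). apply psum_col_le; lia.
Qed.

Lemma cyl_len_ge0 j N : valid_digits m j -> 0 <= cyl_len c j N.
Proof.
  intros V. induction N as [|N IH]; [unfold cyl_len; simpl; lra|].
  rewrite cyl_len_S. apply Rmult_le_pos; [exact IH|]. apply c_ge0; [lia|]. apply V; lia.
Qed.

Lemma Qterm_ge0 j N : valid_digits m j -> 0 <= Qterm c j N.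
Proof.
  intros V. apply Rmult_le_pos.
  - apply psum_col_bounds; [lia|]. pose proof (V (S N)); lia.
  - apply cyl_len_ge0, V.
Qed.

Lemma cyl_start_le j N M : valid_digits m j -> (N <= M)%nat ->
  cyl_start c j N <= cyl_start c j M.
Proof.
  intros V H. induction M as [|M IH].
  - replace N with 0%nat by lia. lra.
  - destruct (Nat.eq_dec N (S M)) as [->|Hne]; [lra|].
    unfold cyl_start in *. simpl.
    pose proof (Qterm_ge0 j M V). specialize (IH ltac:(lia)). lra.
Qed.

Lemma cyl_end_le j N M : valid_digits m j -> (N <= M)%nat ->
  cyl_start c j M + cyl_len c j M <= cyl_start c j N + cyl_len c j N.
Proof.
  intros V H. induction M as [|M IH].
  - replace N with 0%nat by lia. lra.
  - destruct (Nat.eq_dec N (S M)) as [->|Hne]; [lra|].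
    rewrite cyl_end_S.
    pose proof (psum_col_bounds (S M) (S (j (S M))) ltac:(lia)
                  ltac:(pose proof (V (S M)); lia)).
    pose proof (cyl_len_ge0 j M V). specialize (IH ltac:(lia)). nra.
Qed.

Lemma digit_series_bounds j (L : R) : valid_digits m j -> is_series (Qterm c j) L ->
  forall N, cyl_start c j N <= L <= cyl_start c j N + cyl_len c j N.
Proof.
  intros V H N. apply is_series_psum in H. split.
  - apply (is_lim_seq_lb_eventually _ L _ N H). intros n Hn. apply cyl_start_le; auto.
  - apply (is_lim_seq_ub_eventually _ L _ N H). intros n Hn.
    pose proof (cyl_end_le j N n V Hn). pose proof (cyl_len_ge0 j n V).
    change (psum (Qterm c j) n) with (cyl_start c j n). lra.
Qed.

Lemma digit_series_exists j : valid_digits m j -> exists L, is_series (Qterm c j) L.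
Proof.
  intros V. destruct (ex_finite_lim_seq_incr (cyl_start c j) 1) as [l Hl].
  - intro n. apply cyl_start_le; auto.
  - intro n. pose proof (cyl_end_le j 0 n V ltac:(lia)).
    pose proof (cyl_len_ge0 j n V). unfold cyl_start, cyl_len in *. simpl in *. lra.
  - exists l. now apply is_series_psum.
Qed.

Lemma digit_series_01 j (L : R) : valid_digits m j -> is_series (Qterm c j) L -> 0 <= L <= 1.
Proof.
  intros V H. pose proof (digit_series_bounds j L V H 0) as B.
  unfold cyl_start, cyl_len in B. simpl in B. lra.
Qed.

Lemma series_of_max_tail j N : valid_digits m j -> is_lim_seq (cyl_len c j) 0 ->
  (forall M, (N <= M)%nat -> j (S M) = m (S M)) ->
  is_series (Qterm c j) (cyl_start c j N + cyl_len c j N).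
Proof.
  intros V Hlen Hj.
  assert (HE : forall M, (N <= M)%nat ->
            cyl_start c j M + cyl_len c j M = cyl_start c j N + cyl_len c j N).
  { intros M HM. induction M as [|M IH].
    - now replace N with 0%nat by lia.
    - destruct (Nat.eq_dec N (S M)) as [->|ne]; [reflexivity|].
      rewrite cyl_end_S, Hj, c_sum1 by lia. rewrite <- IH by lia. ring. }
  set (E := cyl_start c j N + cyl_len c j N) in *.
  apply is_series_psum.
  apply is_lim_seq_ext_loc with (fun M => E - cyl_len c j M).
  - exists N. intros M HM. rewrite <- (HE M HM). unfold cyl_start. ring.
  - replace (Finite E) with (Finite (E - 0)) by (f_equal; ring).
    apply is_lim_seq_minus'; [apply is_lim_seq_const | exact Hlen].
Qed.

Lemma cyl_end_le_start j j' k : valid_digits m j -> valid_digits m j' ->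
  (forall l, (1 <= l <= k)%nat -> j l = j' l) -> (j (S k) < j' (S k))%nat ->
  cyl_start c j (S k) + cyl_len c j (S k) <= cyl_start c j' (S k).
Proof.
  intros V V' Hpre Hlt. pose proof (cyl_gap c j j' k Hpre) as G.
  pose proof (psum_col_le (S k) (S (j (S k))) (j' (S k)) ltac:(lia) ltac:(lia)
                ltac:(pose proof (V' (S k) ltac:(lia)); lia)).
  pose proof (cyl_len_ge0 j k V). nra.
Qed.

Lemma series_of_max_digits : is_lim_seq (cyl_len c m) 0 -> is_series (Qterm c m) 1.
Proof.
  intros Hlen. assert (V : valid_digits m m) by (intros n _; lia).
  pose proof (series_of_max_tail m 0 V Hlen (fun _ _ => eq_refl)) as H.
  unfold cyl_start, cyl_len in H. simpl in H. now rewrite Rplus_0_l in H.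
Qed.

Hypothesis c_gt0 : forall n i, (1 <= n)%nat -> (i <= m n)%nat -> 0 < c n i.

Lemma psum_col_lt n a b : (1 <= n)%nat -> (a < b)%nat -> (b <= S (m n))%nat ->
  psum (c n) a < psum (c n) b.
Proof. intros Hn. apply psum_lt. intros i Hi. apply c_gt0; lia. Qed.

Lemma cyl_len_gt0 j N : valid_digits m j -> 0 < cyl_len c j N.
Proof.
  intros V. induction N as [|N IH]; [unfold cyl_len; simpl; lra|].
  rewrite cyl_len_S. apply Rmult_lt_0_compat; [exact IH|]. apply c_gt0; [lia|]. apply V; lia.
Qed.

Lemma max_tail_of_end j (X : R) N : valid_digits m j -> is_series (Qterm c j) X ->
  X = cyl_start c j N + cyl_len c j N ->
  forall M, (N <= M)%nat -> j (S M) = m (S M).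
Proof.
  intros V HX HN.
  assert (HE : forall M, (N <= M)%nat -> cyl_start c j M + cyl_len c j M = X).
  { intros M HM. pose proof (cyl_end_le j N M V HM).
    pose proof (digit_series_bounds j X V HX M). lra. }
  intros M HM. pose proof (HE M HM) as H1. pose proof (HE (S M) ltac:(lia)) as H2.
  rewrite cyl_end_S in H2. pose proof (cyl_len_gt0 j M V).
  assert (Hsum : psum (c (S M)) (S (j (S M))) = psum (c (S M)) (S (m (S M)))).
  { rewrite c_sum1 by lia. nra. }
  pose proof (V (S M) ltac:(lia)).
  destruct (Nat.eq_dec (j (S M)) (m (S M))) as [e|ne]; [exact e|].
  pose proof (psum_col_lt (S M) (S (j (S M))) (S (m (S M))) ltac:(lia) ltac:(lia) ltac:(lia)).
  lra.
Qed.

Lemma zero_tail_of_start j (X : R) N : valid_digits m j -> is_series (Qterm c j) X ->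
  X = cyl_start c j N -> forall M, (N <= M)%nat -> j (S M) = 0%nat.
Proof.
  intros V HX HN.
  assert (HS : forall M, (N <= M)%nat -> cyl_start c j M = X).
  { intros M HM. pose proof (cyl_start_le j N M V HM).
    pose proof (digit_series_bounds j X V HX M). lra. }
  intros M HM. pose proof (HS M HM) as H1. pose proof (HS (S M) ltac:(lia)) as H2.
  rewrite cyl_start_S in H2. pose proof (cyl_len_gt0 j M V).
  assert (Hsum : psum (c (S M)) (j (S M)) = psum (c (S M)) 0) by (simpl; nra).
  pose proof (V (S M) ltac:(lia)).
  destruct (Nat.eq_dec (j (S M)) 0) as [e|ne]; [exact e|].
  pose proof (psum_col_lt (S M) 0 (j (S M)) ltac:(lia) ltac:(lia) ltac:(lia)). lra.
Qed.

Lemma adjacent_of_cyl_end_eq_start j j' k : valid_digits m j -> valid_digits m j' ->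
  (forall l, (1 <= l <= k)%nat -> j l = j' l) ->
  cyl_start c j' (S k) = cyl_start c j (S k) + cyl_len c j (S k) ->
  j' (S k) = S (j (S k)).
Proof.
  intros V V' Hpre E. pose proof (cyl_gap c j j' k Hpre) as G.
  pose proof (cyl_len_gt0 j k V).
  assert (Hsum : psum (c (S k)) (j' (S k)) = psum (c (S k)) (S (j (S k)))) by nra.
  pose proof (V (S k) ltac:(lia)). pose proof (V' (S k) ltac:(lia)).
  destruct (Compare_dec.lt_eq_lt_dec (j' (S k)) (S (j (S k)))) as [[Hlt|Heq]|Hgt]; auto.
  - pose proof (psum_col_lt (S k) _ _ ltac:(lia) Hlt ltac:(lia)). lra.
  - pose proof (psum_col_lt (S k) _ _ ltac:(lia) Hgt ltac:(lia)). lra.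
Qed.

End DigitSeries.

Fixpoint greedy_index (b : nat -> R) (k : nat) (r : R) : nat :=
  match k with
  | O => O
  | S k' => if Rle_dec (b (S k')) r then S k' else greedy_index b k' r
  end.

Lemma greedy_index_le b k r : (greedy_index b k r <= k)%nat.
Proof.
  induction k as [|k IH]; simpl; [lia|]. destruct (Rle_dec (b (S k)) r); lia.
Qed.

Lemma greedy_index_lo b k r : b 0%nat <= r -> b (greedy_index b k r) <= r.
Proof.
  intro H. induction k as [|k IH]; simpl; [exact H|]. destruct (Rle_dec (b (S k)) r); auto.
Qed.

Lemma greedy_index_hi b k r :
  (greedy_index b k r < k)%nat -> r < b (S (greedy_index b k r)).
Proof.
  induction k as [|k IH]; simpl; intro H; [lia|].
  destruct (Rle_dec (b (S k)) r) as [h|h]; [lia|].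
  destruct (Nat.eq_dec (greedy_index b k r) k) as [e|ne]; [rewrite e; lra|].
  apply IH. pose proof (greedy_index_le b k r). lia.
Qed.

Definition greedy_digit (m : nat -> nat) (c : nat -> nat -> R) (n : nat) (r : R) : nat :=
  greedy_index (psum (c n)) (m n) r.

(** [greedy_rest m c y N] is the position of [y] in the [N]-th cylinder of its
    greedy expansion, rescaled to [[0,1]]. *)
Fixpoint greedy_rest (m : nat -> nat) (c : nat -> nat -> R) (y : R) (N : nat) : R :=
  match N with
  | O => y
  | S N' => let r := greedy_rest m c y N' in
            let d := greedy_digit m c N r in
            (r - psum (c N) d) / c N d
  end.

Definition greedy_digits (m : nat -> nat) (c : nat -> nat -> R) (y : R) (n : nat) : nat :=
  match n with
  | O => O
  | S n' => greedy_digit m c n (greedy_rest m c y n')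
  end.

Lemma greedy_digits_valid m c y : valid_digits m (greedy_digits m c y).
Proof. intros [|n] Hn; [lia|]. apply greedy_index_le. Qed.

Section GreedyExpansion.

Variables (m : nat -> nat) (c : nat -> nat -> R).
Hypothesis c_ge0 : forall n i, (1 <= n)%nat -> (i <= m n)%nat -> 0 <= c n i.
Hypothesis c_sum1 : forall n, (1 <= n)%nat -> psum (c n) (S (m n)) = 1.
Hypothesis c_last_lt1 : forall n, (1 <= n)%nat -> psum (c n) (m n) < 1.
Hypothesis c_len0 : forall j, valid_digits m j -> is_lim_seq (cyl_len c j) 0.

Lemma greedy_digit_spec n r : (1 <= n)%nat -> 0 <= r <= 1 ->
  let d := greedy_digit m c n r in
  psum (c n) d <= r /\ r <= psum (c n) d + c n d /\ 0 < c n d.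
Proof.
  intros Hn Hr d.
  assert (Hlo : psum (c n) d <= r) by (apply greedy_index_lo; simpl; lra).
  pose proof (greedy_index_le (psum (c n)) (m n) r) as Hle.
  change (greedy_index (psum (c n)) (m n) r) with d in Hle.
  destruct (Nat.eq_dec d (m n)) as [e|ne].
  - pose proof (c_sum1 n Hn) as Hs. pose proof (c_last_lt1 n Hn).
    rewrite e in Hlo |- *. simpl in Hs. lra.
  - pose proof (greedy_index_hi (psum (c n)) (m n) r ltac:(change (d < m n)%nat; lia)) as Hhi.
    change (greedy_index (psum (c n)) (m n) r) with d in Hhi. change (psum (c n) (S d)) with (psum (c n) d + c n d) in Hhi. lra.
Qed.

Lemma greedy_invariant y : 0 <= y <= 1 -> forall N,
  0 <= greedy_rest m c y N <= 1 /\
  y = cyl_start c (greedy_digits m c y) N +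
      cyl_len c (greedy_digits m c y) N * greedy_rest m c y N.
Proof.
  intros Hy N. induction N as [|N [IH1 IH2]].
  - unfold cyl_start, cyl_len. simpl. split; [lra|ring].
  - destruct (greedy_digit_spec (S N) (greedy_rest m c y N) ltac:(lia) IH1)
      as [h1 [h2 h3]].
    set (d := greedy_digit m c (S N) (greedy_rest m c y N)) in *.
    change (greedy_rest m c y (S N)) with ((greedy_rest m c y N - psum (c (S N)) d) / c (S N) d).
    rewrite cyl_start_S, cyl_len_S. change (greedy_digits m c y (S N)) with d.
    split.
    + split; [apply Rdiv_le_0_compat; lra|].
      apply Rmult_le_reg_r with (c (S N) d); auto.
      unfold Rdiv. rewrite Rmult_assoc, Rinv_l by lra. lra.
    + rewrite IH2 at 1. field. lra.
Qed.

Lemma greedy_digits_series y : 0 <= y <= 1 -> is_series (Qterm c (greedy_digits m c y)) y.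
Proof.
  intros Hy. apply is_series_psum. set (j := greedy_digits m c y).
  apply is_lim_seq_le_le with (u := fun N => y - cyl_len c j N) (w := fun N => y).
  - intro N. destruct (greedy_invariant y Hy N) as [h1 h2]. fold j in h2.
    pose proof (cyl_len_ge0 m c c_ge0 j N (greedy_digits_valid m c y)).
    change (psum (Qterm c j) N) with (cyl_start c j N). nra.
  - replace (Finite y) with (Finite (y - 0)) by (f_equal; ring).
    apply is_lim_seq_minus'; [apply is_lim_seq_const|]. apply c_len0, greedy_digits_valid.
  - apply is_lim_seq_const.
Qed.

End GreedyExpansion.

Definition cdf_values (m : nat -> nat) (q p : nat -> nat -> R) (x : R) : R -> Prop :=
  fun y => exists j X, valid_digits m j /\ is_series (Qterm q j) X /\ X <= x /\
                       is_series (Qterm p j) y.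

Definition cdf (m : nat -> nat) (q p : nat -> nat -> R) (x : R) : R :=
  real (Lub_Rbar (cdf_values m q p x)).

Section NegaCdf.

Variables (m : nat -> nat) (q p : nat -> nat -> R).
Hypothesis q_gt0 : forall n i, (1 <= n)%nat -> (i <= m n)%nat -> 0 < q n i.
Hypothesis q_sum1 : forall n, (1 <= n)%nat -> psum (q n) (S (m n)) = 1.
Hypothesis p_ge0 : forall n i, (1 <= n)%nat -> (i <= m n)%nat -> 0 <= p n i.
Hypothesis p_sum1 : forall n, (1 <= n)%nat -> psum (p n) (S (m n)) = 1.
Hypothesis p_last_lt1 : forall n, (1 <= n)%nat -> psum (p n) (m n) < 1.
Hypothesis p_len0 : forall j, valid_digits m j -> is_lim_seq (cyl_len p j) 0.

Let q_ge0 : forall n i, (1 <= n)%nat -> (i <= m n)%nat -> 0 <= q n i :=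
  fun n i Hn Hi => Rlt_le _ _ (q_gt0 n i Hn Hi).

Lemma digit_series_monotone j j' (X X' Y Y' : R) : valid_digits m j -> valid_digits m j' ->
  is_series (Qterm q j) X -> is_series (Qterm q j') X' ->
  is_series (Qterm p j) Y -> is_series (Qterm p j') Y' -> X' <= X -> Y' <= Y.
Proof.
  intros V V' HX HX' HY HY' HXX.
  destruct (first_difference j j') as [Hall|[k [Hpre Hne]]].
  - enough (Y' = Y) by lra.
    apply (is_series_eq (Qterm p j')); [exact HY'|].
    apply is_series_psum. apply is_series_psum in HY.
    apply (is_lim_seq_ext (cyl_start p j)); [|exact HY].
    intro N. apply cyl_prefix_eq. intros l Hl. apply Hall. lia.
  - assert (Hpre' : forall l, (1 <= l <= k)%nat -> j' l = j l)
      by (intros; symmetry; auto).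
    pose proof (digit_series_bounds m p p_ge0 p_sum1 j Y V HY (S k)).
    pose proof (digit_series_bounds m p p_ge0 p_sum1 j' Y' V' HY' (S k)).
    destruct (Compare_dec.lt_dec (j' (S k)) (j (S k))) as [Hlt|Hge].
    + pose proof (cyl_end_le_start m p p_ge0 j' j k V' V Hpre' Hlt). lra.
    + assert (Hlt : (j (S k) < j' (S k))%nat) by lia.
      pose proof (digit_series_bounds m q q_ge0 q_sum1 j X V HX (S k)).
      pose proof (digit_series_bounds m q q_ge0 q_sum1 j' X' V' HX' (S k)).
      pose proof (cyl_end_le_start m q q_ge0 j j' k V V' Hpre Hlt).
      (* the two Q-cylinders touch, so [j] ends in maximal and [j'] in zero digits *)
      assert (EX : X = cyl_start q j (S k) + cyl_len q j (S k)) by lra.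
      assert (EX' : X' = cyl_start q j' (S k)) by lra.
      pose proof (adjacent_of_cyl_end_eq_start m q q_gt0 j j' k V V' Hpre
                    ltac:(lra)) as Hadj.
      assert (EY : Y = cyl_start p j (S k) + cyl_len p j (S k)).
      { apply (is_series_eq (Qterm p j)); [exact HY|].
        apply (series_of_max_tail m p p_sum1 j (S k) V (p_len0 j V)).
        exact (max_tail_of_end m q q_ge0 q_sum1 q_gt0 j X (S k) V HX EX). }
      assert (EY' : Y' = cyl_start p j' (S k)).
      { apply (is_series_eq (Qterm p j')); [exact HY'|].
        apply series_of_zero_tail.
        exact (zero_tail_of_start m q q_ge0 q_sum1 q_gt0 j' X' (S k) V' HX' EX'). }
      pose proof (cyl_gap p j j' k Hpre) as G. rewrite Hadj, Rminus_diag, Rmult_0_l in G.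
      lra.
Qed.

Lemma zero_in_cdf_values x : 0 <= x -> cdf_values m q p x 0.
Proof.
  intros Hx. exists (fun _ => 0%nat), 0.
  repeat split; [intros n _; lia | apply series_of_zero_digits | lra |
                 apply series_of_zero_digits].
Qed.

Lemma cdf_values_le1 x y : cdf_values m q p x y -> y <= 1.
Proof. intros [j [X [V [_ [_ HY]]]]]. exact (proj2 (digit_series_01 m p p_ge0 p_sum1 j y V HY)). Qed.

Lemma cdf_is_lub x : 0 <= x -> is_lub_Rbar (cdf_values m q p x) (cdf m q p x).
Proof.
  intros Hx. pose proof (Lub_Rbar_correct (cdf_values m q p x)) as Hl.
  assert (H0 : Rbar_le 0 (Lub_Rbar (cdf_values m q p x)))
    by (apply (proj1 Hl), zero_in_cdf_values, Hx).
  assert (H1 : Rbar_le (Lub_Rbar (cdf_values m q p x)) 1)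
    by (apply (proj2 Hl); intros y Hy; exact (cdf_values_le1 x y Hy)).
  unfold cdf. destruct (Lub_Rbar (cdf_values m q p x)); simpl in *; tauto.
Qed.

Lemma cdf_digits j (X Y : R) : valid_digits m j ->
  is_series (Qterm q j) X -> is_series (Qterm p j) Y -> cdf m q p X = Y.
Proof.
  intros V HX HY.
  assert (L : is_lub_Rbar (cdf_values m q p X) Y).
  { split.
    - intros y [j' [X' [V' [HX' [Hle HY']]]]].
      exact (digit_series_monotone j j' X X' Y y V V' HX HX' HY HY' Hle).
    - intros b Hb. apply Hb. exists j, X. repeat split; auto. lra. }
  unfold cdf. rewrite (is_lub_Rbar_unique _ _ L). reflexivity.
Qed.

Lemma cdf_nondecr x y : 0 <= x -> x <= y -> cdf m q p x <= cdf m q p y.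
Proof.
  intros Hx Hxy. destruct (cdf_is_lub x Hx) as [_ Lx].
  destruct (cdf_is_lub y ltac:(lra)) as [Uy _].
  apply (Lx (cdf m q p y)). intros z [j [X [V [HX [Hle HY]]]]].
  apply Uy. exists j, X. repeat split; auto. lra.
Qed.

Lemma cdf_onto t : 0 <= t <= 1 -> exists x, 0 <= x <= 1 /\ cdf m q p x = t.
Proof.
  intros Ht. set (j := greedy_digits m p t).
  assert (V : valid_digits m j) by apply greedy_digits_valid.
  destruct (digit_series_exists m q q_ge0 q_sum1 j V) as [X HX].
  exists X. split; [exact (digit_series_01 m q q_ge0 q_sum1 j X V HX)|].
  apply (cdf_digits j X t V HX).
  exact (greedy_digits_series m p p_ge0 p_sum1 p_last_lt1 p_len0 t Ht).
Qed.

End NegaCdf.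

Lemma nega_digit_valid m d : valid_digits m d -> valid_digits m (nega_digit m d).
Proof.
  intros V n Hn. unfold nega_digit. destruct (Nat.odd n); [apply V, Hn | lia].
Qed.

Lemma Fterm_nega m p d k : Fterm m p d k = Qterm p (nega_digit m d) k.
Proof.
  unfold Fterm, Qterm, acoef, betatil, nega_digit. f_equal.
  - destruct (Nat.odd (S k)); reflexivity.
  - apply prod1_ext. intros l _. unfold ptil. destruct (Nat.odd l); reflexivity.
Qed.

Section NondecreasingOnto.

Variables (f : R -> R) (a b : R).
Hypothesis f_nondecr : forall x y, a <= x -> x <= y -> y <= b -> f x <= f y.
Hypothesis f_onto : forall t, f a <= t <= f b -> exists x, a <= x <= b /\ f x = t.

Lemma nondecr_onto_right x eps : a <= x <= b -> 0 < eps ->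
  exists delta, 0 < delta /\ forall y, a <= y <= b -> y < x + delta -> f y < f x + eps.
Proof.
  intros Hx Heps. destruct (Rle_dec (f x + eps / 2) (f b)) as [h|h].
  - destruct (f_onto (f x + eps / 2)) as [x2 [Hx2 E2]].
    { pose proof (f_nondecr a x ltac:(lra) ltac:(lra) ltac:(lra)). lra. }
    assert (x < x2).
    { destruct (Rlt_dec x x2) as [l|l]; auto.
      pose proof (f_nondecr x2 x ltac:(lra) ltac:(lra) ltac:(lra)). lra. }
    exists (x2 - x). split; [lra|]. intros y Hy Hyx.
    pose proof (f_nondecr y x2 ltac:(lra) ltac:(lra) ltac:(lra)). lra.
  - exists 1. split; [lra|]. intros y Hy _.
    pose proof (f_nondecr y b ltac:(lra) ltac:(lra) ltac:(lra)). lra.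
Qed.

Lemma nondecr_onto_left x eps : a <= x <= b -> 0 < eps ->
  exists delta, 0 < delta /\ forall y, a <= y <= b -> x - delta < y -> f x - eps < f y.
Proof.
  intros Hx Heps. destruct (Rle_dec (f a) (f x - eps / 2)) as [h|h].
  - destruct (f_onto (f x - eps / 2)) as [x1 [Hx1 E1]].
    { pose proof (f_nondecr x b ltac:(lra) ltac:(lra) ltac:(lra)). lra. }
    assert (x1 < x).
    { destruct (Rlt_dec x1 x) as [l|l]; auto.
      pose proof (f_nondecr x x1 ltac:(lra) ltac:(lra) ltac:(lra)). lra. }
    exists (x - x1). split; [lra|]. intros y Hy Hyx.
    pose proof (f_nondecr x1 y ltac:(lra) ltac:(lra) ltac:(lra)). lra.
  - exists 1. split; [lra|]. intros y Hy _.
    pose proof (f_nondecr a y ltac:(lra) ltac:(lra) ltac:(lra)). lra.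
Qed.

Lemma nondecr_onto_continuous x : a <= x <= b -> forall eps, 0 < eps ->
  exists delta, 0 < delta /\
    forall y, a <= y <= b -> Rabs (y - x) < delta -> Rabs (f y - f x) < eps.
Proof.
  intros Hx eps Heps.
  destruct (nondecr_onto_right x eps Hx Heps) as [d2 [Hd2 U]].
  destruct (nondecr_onto_left x eps Hx Heps) as [d1 [Hd1 L]].
  exists (Rmin d1 d2). split; [apply Rmin_pos; auto|].
  intros y Hy Hyx. pose proof (Rmin_l d1 d2). pose proof (Rmin_r d1 d2).
  apply Rabs_def2 in Hyx as [Hlo Hhi].
  pose proof (U y Hy ltac:(lra)). pose proof (L y Hy ltac:(lra)).
  apply Rabs_def1; lra.
Qed.

End NondecreasingOnto.

Theorem mainTheorem9
  (m : nat -> nat) (q p : nat -> nat -> R)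
  (hq_pos : forall n i, (1 <= n)%nat -> (i <= m n)%nat -> 0 < q n i)
  (hq_sum : forall n, (1 <= n)%nat -> psum (q n) (S (m n)) = 1)
  (hq_prod : forall d, valid_digits m d ->
      is_lim_seq (fun N => prod1 (fun l => q l (d l)) N) 0)
  (hp_bd : forall n i, (1 <= n)%nat -> (i <= m n)%nat -> -1 < p n i < 1)
  (hp_sum : forall n, (1 <= n)%nat -> psum (p n) (S (m n)) = 1)
  (hp_prod : forall d, valid_digits m d ->
      is_lim_seq (fun N => prod1 (fun l => Rabs (p l (d l))) N) 0)
  (hp_beta : forall n c, (1 <= n)%nat -> (1 <= c)%nat -> (c <= m n)%nat ->
      0 < psum (p n) c < 1)
  (hp_nonneg : forall n i, (1 <= n)%nat -> (i <= m n)%nat -> 0 <= p n i) :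
  exists F : R -> R,
    (forall x d, 0 <= x <= 1 -> valid_digits m d -> nega_rep m q d x ->
       is_series (Fterm m p d) (F x)) /\
    F 0 = 0 /\ F 1 = 1 /\
    (forall x y, 0 <= x -> x <= y -> y <= 1 -> F x <= F y) /\
    (forall x, 0 <= x <= 1 -> forall eps, 0 < eps -> exists delta, 0 < delta /\
       forall y, 0 <= y <= 1 -> Rabs (y - x) < delta -> Rabs (F y - F x) < eps).
Proof.
  (* [hp_bd] is unused: it follows from [hp_nonneg] and [hp_sum]. *)
  assert (p_last_lt1 : forall n, (1 <= n)%nat -> psum (p n) (m n) < 1).
  { intros n Hn. destruct (m n) eqn:E; [simpl; lra|].
    apply (hp_beta n (S n0)); lia. }
  assert (p_len0 : forall j, valid_digits m j -> is_lim_seq (cyl_len p j) 0).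
  { intros j V. refine (is_lim_seq_ext _ _ _ _ (hp_prod j V)).
    intro N. apply prod1_ext. intros l Hl. apply Rabs_pos_eq, hp_nonneg; [lia|]. apply V; lia. }
  set (F := cdf m q p).
  assert (HF : forall j (X Y : R), valid_digits m j -> is_series (Qterm q j) X ->
                 is_series (Qterm p j) Y -> F X = Y)
    by exact (cdf_digits m q p hq_pos hq_sum hp_nonneg hp_sum p_len0).
  assert (F0 : F 0 = 0).
  { apply (HF (fun _ => 0%nat)); [intros n _; lia | apply series_of_zero_digits ..]. }
  assert (F1 : F 1 = 1).
  { assert (Vm : valid_digits m m) by (intros n _; lia).
    apply (HF m 1 1 Vm); apply series_of_max_digits; auto; exact (hq_prod m Vm). }
  assert (Fmono : forall x y, 0 <= x -> x <= y -> y <= 1 -> F x <= F y)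
    by (intros x y Hx Hxy _; apply cdf_nondecr; auto).
  exists F. split; [|split; [exact F0|split; [exact F1|split; [exact Fmono|]]]].
  - intros x d Hx V Hrep. pose proof (nega_digit_valid m d V) as Vn.
    destruct (digit_series_exists m p hp_nonneg hp_sum _ Vn) as [Y HY].
    rewrite (HF _ x Y Vn Hrep HY).
    exact (is_series_ext _ _ _ (fun k => eq_sym (Fterm_nega m p d k)) HY).
  - apply (nondecr_onto_continuous F 0 1 Fmono).
    rewrite F0, F1. exact (cdf_onto m q p hq_pos hq_sum hp_nonneg hp_sum p_last_lt1 p_len0).
Qed.
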